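(* Let $\omega_0,\alpha,\omega_d>0$, $J_0=\begin{bmatrix}0&\omega_0\\-\omega_0&0\end{bmatrix}$, $\tilde\Lambda=\begin{bmatrix}0&0\\0&-\frac{\alpha}{2}\end{bmatrix}$, and consider the system on $\mathbb{R}^3$ $$\dot{\bar z}=(J_0+\tilde\Lambda)\bar z+(e^{\hat d}-1)\tilde\Lambda\bar z,\qquad \dot{\hat d}=-\omega_d(e^{\hat d}-1).$$ Let $$P=\begin{bmatrix}\frac{\alpha}{4\omega_0^2}+\frac{2}{\alpha}&\frac{1}{2\omega_0}\\ \frac{1}{2\omega_0}&\frac{2}{\alpha}\end{bmatrix},\qquad G=P\tilde\Lambda+\tilde\Lambda^\top P,\qquad b=\frac{\|G\|^2}{2\lambda_{\min}(P)},$$ where $\|G\|$ is the spectral norm and $\lambda_{\min}(P)$ the smallest eigenvalue of $P$. Then $P=P^\top>0$, $P(J_0+\tilde\Lambda)+(J_0+\tilde\Lambda)^\top P=-I$, and the function $$V(\bar z,\hat d)=\ln(1+\bar z^\top P\bar z)+\frac{b}{\omega_d}(e^{\hat d}-\hat d-1)$$ satisfies, along trajectories of the system, for all $(\bar z,\hat d)\in\mathbb{R}^2\times\mathbb{R}$, $$\dot V\le\frac{-\frac12|\bar z|^2-b(e^{\hat d}-1)^2}{1+\bar z^\top P\bar z}.$$ *)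

From HB Require Import structures.
From mathcomp Require Import all_boot all_order all_algebra.
From mathcomp Require Import all_classical all_reals all_analysis.
Set Implicit Arguments. Unset Strict Implicit. Unset Printing Implicit Defensive.
Import Order.TTheory GRing.Theory Num.Theory.
Local Open Scope ring_scope.
Local Open Scope classical_set_scope.

Section Defs.
Variable R : realType.

Definition mx2 (a b c d : R) : 'M[R]_2 :=
  \matrix_(i < 2, j < 2) nth 0 (nth [::] [:: [:: a; b]; [:: c; d]] i) j.

Definition eucl_norm n (v : 'cV[R]_n) : R := Num.sqrt (\sum_i v i 0 ^+ 2).

Definition qform n (A : 'M[R]_n) (x : 'cV[R]_n) : R := (x^T *m A *m x) 0 0.

Definition spectral_norm m n (A : 'M[R]_(m, n)) : R :=
  sup [set eucl_norm (A *m x) | x in [set x : 'cV[R]_n | eucl_norm x = 1]].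

Definition lambda_min n (A : 'M[R]_n) : R := inf [set a : R | eigenvalue A a].

Definition posdef n (A : 'M[R]_n) : Prop :=
  A^T = A /\ forall x : 'cV[R]_n, x != 0 -> 0 < qform A x.

Definition J0 (w0 : R) : 'M[R]_2 := mx2 0 w0 (- w0) 0.
Definition Lam (al : R) : 'M[R]_2 := mx2 0 0 0 (- (al / 2)).
Definition Pmat (w0 al : R) : 'M[R]_2 :=
  mx2 (al / (4 * w0 ^+ 2) + 2 / al) (1 / (2 * w0)) (1 / (2 * w0)) (2 / al).
Definition Gmat (w0 al : R) : 'M[R]_2 :=
  Pmat w0 al *m Lam al + (Lam al)^T *m Pmat w0 al.
Definition bconst (w0 al : R) : R :=
  spectral_norm (Gmat w0 al) ^+ 2 / (2 * lambda_min (Pmat w0 al)).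

Definition fz (w0 al : R) (z : 'cV[R]_2) (d : R) : 'cV[R]_2 :=
  (J0 w0 + Lam al) *m z + (expR d - 1) *: (Lam al *m z).
Definition fd (wd : R) (d : R) : R := - wd * (expR d - 1).

Definition Vfun (w0 al wd : R) (z : 'cV[R]_2) (d : R) : R :=
  ln (1 + qform (Pmat w0 al) z) + bconst w0 al / wd * (expR d - d - 1).

(* V restricted to the line through (z,d) in the direction of the vector field;
   its derivative at t = 0 is \dot V(z,d) *)
Definition Vline (w0 al wd : R) (z : 'cV[R]_2) (d : R) (t : R) : R :=
  Vfun w0 al wd (z + t *: fz w0 al z d) (d + t * fd wd d).

End Defs.

From HB Require Import structures.
From mathcomp Require Import all_boot all_order all_algebra.
From mathcomp Require Import all_classical all_reals all_analysis.
From mathcomp Require Import ring lra.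
Import Order.TTheory GRing.Theory Num.Theory.
Local Open Scope ring_scope.

(* P solves the Lyapunov equation for J0 + Λ, so along the flow the z-part of V
   has derivative (-|z|^2 + (e^d - 1) z^T G z) / (1 + z^T P z), while the d-part
   contributes exactly -b (e^d - 1)^2.  The cross term is absorbed by Young's
   inequality using |z^T G z| <= ‖G‖ |z|^2 and λmin(P) |z|^2 <= z^T P z; this is
   what the choice b = ‖G‖^2 / (2 λmin(P)) is made for.  For the symmetric 2x2
   matrix P, λmin(P) is the smaller root of the characteristic polynomial. *)

Section EuclideanNorm.
Context {R : realType} {n : nat}.
Implicit Types (u v : 'cV[R]_n) (c : R).

Lemma eucl_norm_ge0 v : 0 <= eucl_norm v.
Proof. exact: sqrtr_ge0. Qed.

Lemma eucl_norm_sqr v : eucl_norm v ^+ 2 = \sum_i v i 0 ^+ 2.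
Proof. by rewrite sqr_sqrtr // sumr_ge0 // => i _; exact: sqr_ge0. Qed.

Lemma eucl_normZ c v : eucl_norm (c *: v) = `|c| * eucl_norm v.
Proof.
rewrite /eucl_norm (eq_bigr (fun i => c ^+ 2 * v i 0 ^+ 2)) => [|i _]; last first.
  by rewrite mxE exprMn.
by rewrite -mulr_sumr sqrtrM ?sqr_ge0 // sqrtr_sqr.
Qed.

Lemma eucl_norm_eq0 v : (eucl_norm v == 0) = (v == 0).
Proof.
apply/idP/idP => [|/eqP->]; last first.
  by rewrite /eucl_norm big1 ?sqrtr0 // => i _; rewrite mxE expr0n.
rewrite sqrtr_eq0 => le_sum0.
have sum0 : \sum_i v i 0 ^+ 2 = 0.
  by apply/eqP; rewrite eq_le le_sum0 sumr_ge0 // => i _; exact: sqr_ge0.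
apply/eqP/matrixP => i j; rewrite ord1 mxE; apply/eqP.
by rewrite -sqrf_eq0 (psumr_eq0P _ sum0) // => k _; exact: sqr_ge0.
Qed.

Lemma eucl_norm0 : eucl_norm (0 : 'cV[R]_n) = 0.
Proof. by apply/eqP; rewrite eucl_norm_eq0. Qed.

Lemma eucl_norm_normalize v : eucl_norm v != 0 ->
  eucl_norm ((eucl_norm v)^-1 *: v) = 1.
Proof.
by move=> v0; rewrite eucl_normZ ger0_norm ?invr_ge0 ?eucl_norm_ge0 // mulVf.
Qed.

Lemma eucl_norm_coord_le1 v i : eucl_norm v = 1 -> `|v i 0| <= 1.
Proof.
move=> v1; have : v i 0 ^+ 2 <= 1.
  rewrite -(expr1n _ 2) -v1 eucl_norm_sqr (bigD1 i) //= lerDl.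
  by rewrite sumr_ge0 // => j _; exact: sqr_ge0.
by rewrite -real_normK ?num_real // expr_le1.
Qed.

Lemma dotmx_sum u v : (u^T *m v) 0 0 = \sum_i u i 0 * v i 0.
Proof. by rewrite mxE; apply: eq_bigr => i _; rewrite mxE. Qed.

(* Polarization: [|u - v|^2 = 2 - 2 u.v] for unit vectors. *)
Lemma dotmx_unit_le1 u v : eucl_norm u = 1 -> eucl_norm v = 1 -> (u^T *m v) 0 0 <= 1.
Proof.
move=> u1 v1; rewrite dotmx_sum.
have : \sum_i (u i 0 - v i 0) ^+ 2 = 2 - 2 * \sum_i u i 0 * v i 0.
  rewrite (eq_bigr (fun i => u i 0 ^+ 2 + v i 0 ^+ 2 - 2 * (u i 0 * v i 0))) => [|i _];
    last by ring.
  by rewrite sumrB big_split /= -mulr_sumr -!eucl_norm_sqr u1 v1 expr1n.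
have : 0 <= \sum_i (u i 0 - v i 0) ^+ 2 by rewrite sumr_ge0 // => i _; exact: sqr_ge0.
lra.
Qed.

Lemma dotmx_le u v : `|(u^T *m v) 0 0| <= eucl_norm u * eucl_norm v.
Proof.
have [/eqP|u0] := eqVneq (eucl_norm u) 0.
  by rewrite eucl_norm_eq0 => /eqP->; rewrite trmx0 mul0mx mxE normr0 eucl_norm0 mul0r.
have [/eqP|v0] := eqVneq (eucl_norm v) 0.
  by rewrite eucl_norm_eq0 => /eqP->; rewrite mulmx0 mxE normr0 eucl_norm0 mulr0.
set u1 := (eucl_norm u)^-1 *: u; set v1 := (eucl_norm v)^-1 *: v.
have u11 : eucl_norm u1 = 1 by exact: eucl_norm_normalize.
have v11 : eucl_norm v1 = 1 by exact: eucl_norm_normalize.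
have -> : (u^T *m v) 0 0 = eucl_norm u * eucl_norm v * (u1^T *m v1) 0 0.
  by rewrite /u1 /v1 !linearZ /= -scalemxAl !mxE; field; rewrite u0 v0.
rewrite normrM ger0_norm ?mulr_ge0 ?eucl_norm_ge0 //.
rewrite ger_pMr ?mulr_gt0 ?lt0r ?u0 ?v0 ?eucl_norm_ge0 //.
rewrite ler_norml dotmx_unit_le1 // andbT -lerNl.
have -> : - (u1^T *m v1) 0 0 = (u1^T *m - v1) 0 0 by rewrite mulmxN [RHS]mxE.
apply: dotmx_unit_le1 => //.
by rewrite -scaleN1r eucl_normZ normrN1 mul1r.
Qed.

End EuclideanNorm.

Section SpectralNorm.
Context {R : realType} {m n : nat}.
Implicit Types (A : 'M[R]_(m, n)) (x : 'cV[R]_n).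

Lemma spectral_norm_ubound A :
  has_ubound [set eucl_norm (A *m x) | x in [set x | eucl_norm x = 1]].
Proof.
exists (Num.sqrt (\sum_i (\sum_j `|A i j|) ^+ 2)) => _ [x /= x1 <-].
rewrite ler_sqrt; last by rewrite sumr_ge0 // => i _; exact: sqr_ge0.
apply: ler_sum => i _; rewrite -[X in X <= _]real_normK ?num_real //.
rewrite lerXn2r ?nnegrE ?sumr_ge0 //.
rewrite mxE; apply: (le_trans (ler_norm_sum _ _ _)); apply: ler_sum => j _.
by rewrite normrM ler_piMr // eucl_norm_coord_le1.
Qed.

Lemma eucl_norm_mulmx_le A x : eucl_norm (A *m x) <= spectral_norm A * eucl_norm x.
Proof.
have [/eqP|x0] := eqVneq (eucl_norm x) 0.
  by rewrite eucl_norm_eq0 => /eqP->; rewrite mulmx0 !eucl_norm0 mulr0.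
set x1 := (eucl_norm x)^-1 *: x.
have x11 : eucl_norm x1 = 1 by exact: eucl_norm_normalize.
have -> : A *m x = eucl_norm x *: (A *m x1) by rewrite scalemxAr scalerA divff ?scale1r.
rewrite eucl_normZ ger0_norm ?eucl_norm_ge0 // mulrC ler_wpM2r ?eucl_norm_ge0 //.
apply: sup_upper_bound; last by exists x1.
by split; [exists (eucl_norm (A *m x1)), x1 | exact: spectral_norm_ubound].
Qed.

End SpectralNorm.

Lemma qform_le_spectral (R : realType) n (A : 'M[R]_n) z :
  `|qform A z| <= spectral_norm A * eucl_norm z ^+ 2.
Proof.
rewrite /qform -mulmxA; apply: (le_trans (dotmx_le _ _)).
by rewrite mulrC expr2 mulrA ler_wpM2r ?eucl_norm_ge0 // eucl_norm_mulmx_le.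
Qed.

Section QuadraticForm.
Context {R : realType} {n : nat}.
Implicit Types (A B P M N : 'M[R]_n) (z f : 'cV[R]_n) (c t mu : R).

Lemma qformD A B z : qform (A + B) z = qform A z + qform B z.
Proof. by rewrite /qform mulmxDr mulmxDl mxE. Qed.

Lemma qformZ c A z : qform (c *: A) z = c * qform A z.
Proof. by rewrite /qform -scalemxAr -scalemxAl mxE. Qed.

Lemma qform_scalar c z : qform c%:M z = c * eucl_norm z ^+ 2.
Proof.
rewrite /qform mul_mx_scalar -scalemxAl mxE dotmx_sum eucl_norm_sqr.
by congr (_ * _); apply: eq_bigr => i _; rewrite expr2.
Qed.

Lemma qform_line A z f t : qform A (z + t *: f) =
  qform A z + t * ((z^T *m A *m f) 0 0 + (f^T *m A *m z) 0 0) + t ^+ 2 * qform A f.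
Proof.
rewrite /qform.
have -> : (z + t *: f)^T = z^T + t *: f^T by rewrite linearD linearZ.
rewrite !mulmxDl !mulmxDr -!scalemxAl -!scalemxAr !mxE.
ring.
Qed.

Definition lyapunov_mx P M := P *m M + M^T *m P.

Lemma lyapunov_mxD P M N : lyapunov_mx P (M + N) = lyapunov_mx P M + lyapunov_mx P N.
Proof. by rewrite /lyapunov_mx mulmxDr [(M + N)^T]linearD /= mulmxDl addrACA. Qed.

Lemma lyapunov_mxZ P c M : lyapunov_mx P (c *: M) = c *: lyapunov_mx P M.
Proof. by rewrite /lyapunov_mx [(c *: M)^T]linearZ /= -scalemxAr -scalemxAl scalerDr. Qed.

Lemma qform_cross_mulmx P M z :
  (z^T *m P *m (M *m z)) 0 0 + ((M *m z)^T *m P *m z) 0 0 = qform (lyapunov_mx P M) z.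
Proof. by rewrite /qform mulmxDr mulmxDl [RHS]mxE trmx_mul !mulmxA. Qed.

Lemma posdef_qform_ge A mu : A^T = A -> 0 < mu ->
  (forall z, mu * eucl_norm z ^+ 2 <= qform A z) -> posdef A.
Proof.
move=> symA mu_gt0 geA; split => // z z0; apply: lt_le_trans (geA z).
by rewrite mulr_gt0 // exprn_gt0 // lt0r eucl_norm_eq0 z0 eucl_norm_ge0.
Qed.

End QuadraticForm.

Section TwoByTwo.
Context {R : realType}.
Implicit Types (a b c d : R) (A : 'M[R]_2) (z : 'cV[R]_2).

Lemma ord0_eq0 : ord0 = 0 :> 'I_2. Proof. exact: val_inj. Qed.
Lemma lift_ord0_eq1 : lift ord0 ord0 = 1 :> 'I_2. Proof. exact: val_inj. Qed.

Lemma mx2_eta A : A = mx2 (A 0 0) (A 0 1) (A 1 0) (A 1 1).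
Proof.
apply/matrixP => i j; rewrite mxE.
by case: i => [[|[|//]] ?]; case: j => [[|[|//]] ?]; congr (A _ _); apply/val_inj.
Qed.

Lemma mulmx2 a b c d a' b' c' d' : mx2 a b c d *m mx2 a' b' c' d' =
  mx2 (a * a' + b * c') (a * b' + b * d') (c * a' + d * c') (c * b' + d * d').
Proof. by rewrite [LHS]mx2_eta !mxE !big_ord_recl !big_ord0 !mxE /= !addr0. Qed.

Lemma addmx2 a b c d a' b' c' d' :
  mx2 a b c d + mx2 a' b' c' d' = mx2 (a + a') (b + b') (c + c') (d + d').
Proof. by rewrite [LHS]mx2_eta !mxE. Qed.

Lemma trmx2 a b c d : (mx2 a b c d)^T = mx2 a c b d.
Proof. by rewrite [LHS]mx2_eta !mxE. Qed.

Lemma oppmx2 a b c d : - mx2 a b c d = mx2 (- a) (- b) (- c) (- d).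
Proof. by rewrite [LHS]mx2_eta !mxE. Qed.

Lemma scalar_mx2 a : a%:M = mx2 a 0 0 a.
Proof. by rewrite [LHS]mx2_eta !mxE. Qed.

Lemma row_mulmx2 a b c d (v : 'rV[R]_2) :
  ((v *m mx2 a b c d) 0 0 = v 0 0 * a + v 0 1 * c) *
  ((v *m mx2 a b c d) 0 1 = v 0 0 * b + v 0 1 * d).
Proof.
by rewrite !mxE !big_ord_recl !big_ord0 !mxE /= !addr0 lift_ord0_eq1 ord0_eq0.
Qed.

Lemma qform_mx2 a b c d z : qform (mx2 a b c d) z =
  z 0 0 * (a * z 0 0 + b * z 1 0) + z 1 0 * (c * z 0 0 + d * z 1 0).
Proof.
rewrite /qform -mulmxA !mxE !big_ord_recl !big_ord0 /= !addr0 !mxE.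
by rewrite !big_ord_recl !big_ord0 !mxE /= !addr0 lift_ord0_eq1 ord0_eq0.
Qed.

Lemma eucl_norm2_sqr z : eucl_norm z ^+ 2 = z 0 0 ^+ 2 + z 1 0 ^+ 2.
Proof.
by rewrite eucl_norm_sqr !big_ord_recl big_ord0 addr0 lift_ord0_eq1 ord0_eq0.
Qed.

End TwoByTwo.

Section Symmetric2.
Context {R : realType}.
Variables p r s : R.

Definition sym2_min_eig : R := (p + s) / 2 - Num.sqrt ((p - s) ^+ 2 + 4 * r ^+ 2) / 2.

Local Notation mu := sym2_min_eig.
Local Notation delta := (Num.sqrt ((p - s) ^+ 2 + 4 * r ^+ 2) / 2).

Lemma sym2_delta_ge0 : 0 <= delta.
Proof. by rewrite divr_ge0 ?sqrtr_ge0. Qed.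

Lemma sym2_delta_sqr : delta ^+ 2 = ((p - s) / 2) ^+ 2 + r ^+ 2.
Proof.
rewrite expr_div_n sqr_sqrtr; first by field.
by rewrite addr_ge0 ?sqr_ge0 // mulr_ge0 ?sqr_ge0.
Qed.

Lemma eigenvalue_sym2_char a : eigenvalue (mx2 p r r s) a -> (p - a) * (s - a) = r ^+ 2.
Proof.
move=> /eigenvalueP [v va v0].
have := congr1 (fun M : 'rV_2 => M 0 0) va; have := congr1 (fun M : 'rV_2 => M 0 1) va.
rewrite /= !row_mulmx2 !mxE => e1 e0.
have v_nz : v 0 0 != 0 \/ v 0 1 != 0.
  case: (eqVneq (v 0 0) 0) => h0; last by left.
  case: (eqVneq (v 0 1) 0) => h1; last by right.
  by move/eqP: v0; case; apply/matrixP => i j; rewrite ord1 mxE;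
     case: j => [[|[|//]] ?]; [rewrite -h0 | rewrite -h1]; congr (v 0 _); apply/val_inj.
set D := (p - a) * (s - a) - r ^+ 2.
have D0 : D * v 0 0 = (s - a) * (v 0 0 * p + v 0 1 * r - a * v 0 0)
                     - r * (v 0 0 * r + v 0 1 * s - a * v 0 1) by rewrite /D; ring.
have D1 : D * v 0 1 = (p - a) * (v 0 0 * r + v 0 1 * s - a * v 0 1)
                     - r * (v 0 0 * p + v 0 1 * r - a * v 0 0) by rewrite /D; ring.
rewrite e0 e1 !subrr !mulr0 subrr in D0 D1.
apply/eqP; rewrite -subr_eq0 -/D.
by case: v_nz => nz; [move/eqP: D0 | move/eqP: D1]; rewrite mulf_eq0 (negbTE nz) orbF.
Qed.

Lemma sym2_min_eig_le a : eigenvalue (mx2 p r r s) a -> mu <= a.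
Proof.
move=> /eigenvalue_sym2_char char_a.
have : (a - (p + s) / 2) ^+ 2 = delta ^+ 2.
  by rewrite sym2_delta_sqr -char_a; field.
have := sym2_delta_ge0; rewrite /mu; nra.
Qed.

Lemma sym2_min_eig_char : (p - mu) * (s - mu) = r ^+ 2.
Proof.
have -> : (p - mu) * (s - mu) = delta ^+ 2 - ((p - s) / 2) ^+ 2 by rewrite /mu; field.
by rewrite sym2_delta_sqr addrC addKr.
Qed.

Lemma sym2_min_eig_gt0 : 0 < p -> 0 < p * s - r ^+ 2 -> 0 < mu.
Proof.
move=> p_gt0 det_gt0.
have s_gt0 : 0 < s by have := sqr_ge0 r; nra.
have := sym2_delta_sqr; have := sym2_delta_ge0.
rewrite /mu; set dl := delta => dl_ge0 dl_sqr.
have : dl ^+ 2 < ((p + s) / 2) ^+ 2.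
  rewrite -subr_gt0 dl_sqr.
  by have -> : ((p + s) / 2) ^+ 2 - (((p - s) / 2) ^+ 2 + r ^+ 2) = p * s - r ^+ 2 by field.
nra.
Qed.

Hypothesis r_neq0 : r != 0.

Lemma sym2_min_eig_eigenvalue : eigenvalue (mx2 p r r s) mu.
Proof.
apply/eigenvalueP; exists (\row_(j < 2) nth 0 [:: r; mu - p] j); last first.
  by apply/negP => /eqP/matrixP/(_ 0 0); rewrite !mxE /=; exact/eqP.
apply/matrixP => i j; rewrite ord1.
case: j => [[|[|//]] j2].
  have -> : Ordinal j2 = 0 by apply/val_inj.
  by rewrite !row_mulmx2 !mxE /=; ring.
have -> : Ordinal j2 = 1 by apply/val_inj.
rewrite !row_mulmx2 !mxE /=.
have -> : r * r = (p - mu) * (s - mu) by rewrite sym2_min_eig_char expr2.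
ring.
Qed.

Lemma lambda_min_sym2 : lambda_min (mx2 p r r s) = mu.
Proof.
apply/eqP; rewrite eq_le; apply/andP; split.
  apply: ge_inf; last exact: sym2_min_eig_eigenvalue.
  by exists mu => a /sym2_min_eig_le.
by apply: lb_le_inf; [exists mu; exact: sym2_min_eig_eigenvalue | move=> a /sym2_min_eig_le].
Qed.

Lemma sym2_min_eig_lt : mu < p.
Proof.
have r2 : 0 < r ^+ 2 by rewrite exprn_even_gt0.
have := sym2_delta_sqr; have := sym2_delta_ge0; rewrite /mu; nra.
Qed.

(* Completing the square: [(p - mu) (q(z) - mu |z|^2) = ((p - mu) z0 + r z1)^2]. *)
Lemma qform_sym2_ge z : mu * eucl_norm z ^+ 2 <= qform (mx2 p r r s) z.
Proof.
rewrite eucl_norm2_sqr qform_mx2 -subr_ge0.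
have pmu : 0 < p - mu by rewrite subr_gt0 sym2_min_eig_lt.
rewrite -(pmulr_rge0 _ pmu).
have -> : (p - mu) * (z 0 0 * (p * z 0 0 + r * z 1 0) + z 1 0 * (r * z 0 0 + s * z 1 0)
            - mu * (z 0 0 ^+ 2 + z 1 0 ^+ 2))
        = ((p - mu) * z 0 0 + r * z 1 0) ^+ 2 + ((p - mu) * (s - mu) - r ^+ 2) * z 1 0 ^+ 2.
  by ring.
by rewrite sym2_min_eig_char subrr mul0r addr0 sqr_ge0.
Qed.

End Symmetric2.

Section LyapunovDerivative.
Context {R : realType}.

Lemma is_derive_ln_comp (f : R -> R) x df : 0 < f x -> is_derive x 1 f df ->
  is_derive x 1 (fun t => ln (f t)) (df / f x).
Proof.
move=> fx_gt0 f'; apply: is_derive_eq (is_derive1_comp (is_derive1_ln fx_gt0) f') _.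
exact: mulrC.
Qed.

Lemma is_derive0_quadratic (a b c : R) :
  is_derive (0 : R) 1 (fun t => a + t * b + t ^+ 2 * c) b.
Proof.
apply: is_derive_eq.
rewrite !(scaler0, add0r, addr0, mul1r, expr0n, scale0r); exact: mulr1.
Qed.

Lemma is_derive0_expR_line (d e : R) :
  is_derive (0 : R) 1 (fun t => expR (d + t * e) - (d + t * e) - 1) ((expR d - 1) * e).
Proof.
apply: is_derive_eq.
by rewrite mul0r !(addr0, scaler0, add0r, mul1r, subr0) mulrBl mul1r -[e in RHS]mulr1.
Qed.

Lemma is_derive_lyapunov_line n (P : 'M[R]_n) (z f : 'cV[R]_n) (k d e : R) :
  0 <= qform P z ->
  is_derive (0 : R) 1
    (fun t => ln (1 + qform P (z + t *: f)) + k * (expR (d + t * e) - (d + t * e) - 1))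
    (((z^T *m P *m f) 0 0 + (f^T *m P *m z) 0 0) / (1 + qform P z)
     + k * ((expR d - 1) * e)).
Proof.
move=> q_ge0; set B := (z^T *m P *m f) 0 0 + _.
pose Q t := 1 + qform P z + t * B + t ^+ 2 * qform P f.
have Q0 : Q 0 = 1 + qform P z by rewrite /Q mul0r expr0n mul0r !addr0.
have Q0_gt0 : 0 < Q 0 by rewrite Q0 ltr_pwDl.
have := is_deriveD (is_derive_ln_comp _ _ _ Q0_gt0 (is_derive0_quadratic _ _ _))
                   (is_deriveZ k (is_derive0_expR_line d e)).
rewrite Q0; congr is_derive; apply/funext => t.
by rewrite /Q /= qform_line !addrA.
Qed.
End LyapunovDerivative.

(* Young: [u w <= |u| g |z|^2 <= |z|^2 / 2 + (g^2 / 2) u^2 |z|^2], then [mu |z|^2 <= q]. *)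
Lemma lyapunov_young (R : realType) (n2 q u w g mu : R) :
  0 <= n2 -> 0 < mu -> mu * n2 <= q -> `|w| <= g * n2 ->
  (- n2 + u * w) / (1 + q) - g ^+ 2 / (2 * mu) * u ^+ 2
    <= (- (1 / 2) * n2 - g ^+ 2 / (2 * mu) * u ^+ 2) / (1 + q).
Proof.
move=> n2_ge0 mu_gt0 q_ge w_le.
have q_gt : 0 < 1 + q.
  have : 0 <= mu * n2 by rewrite mulr_ge0 // ltW.
  lra.
set b := g ^+ 2 / (2 * mu).
have b_ge0 : 0 <= b by rewrite /b divr_ge0 ?sqr_ge0 // mulr_ge0 // ltW.
rewrite -subr_ge0.
have -> : (- (1 / 2) * n2 - b * u ^+ 2) / (1 + q) - ((- n2 + u * w) / (1 + q) - b * u ^+ 2)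
        = (n2 / 2 + b * u ^+ 2 * q - u * w) / (1 + q) by field; rewrite gt_eqF.
rewrite divr_ge0 ?(ltW q_gt) // subr_ge0.
have uw : u * w <= `|u| * g * n2.
  by rewrite -mulrA (le_trans (ler_norm _)) // normrM ler_wpM2l.
have amgm : `|u| * g * n2 <= n2 / 2 + g ^+ 2 * u ^+ 2 * n2 / 2.
  rewrite -subr_ge0 -[u ^+ 2]real_normK ?num_real //.
  have -> : n2 / 2 + g ^+ 2 * `|u| ^+ 2 * n2 / 2 - `|u| * g * n2
          = n2 / 2 * (1 - `|u| * g) ^+ 2 by field.
  by rewrite mulr_ge0 ?sqr_ge0 ?divr_ge0.
have bq : g ^+ 2 * u ^+ 2 * n2 / 2 <= b * u ^+ 2 * q.
  have -> : g ^+ 2 * u ^+ 2 * n2 / 2 = b * u ^+ 2 * (mu * n2).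
    by rewrite /b; field; rewrite gt_eqF.
  by rewrite ler_wpM2l // mulr_ge0 ?sqr_ge0.
lra.
Qed.

Section Oscillator.
Context {R : realType} {w0 al : R}.
Hypotheses (w0_gt0 : 0 < w0) (al_gt0 : 0 < al).

Local Notation A := (J0 w0 + Lam al).
Local Notation P := (Pmat w0 al).

Lemma trmx_Pmat : P^T = P.
Proof. by rewrite /Pmat trmx2. Qed.

Lemma Pmat_lyapunov : P *m A + A^T *m P = - 1%:M.
Proof.
rewrite /Pmat /J0 /Lam addmx2 trmx2 !mulmx2 addmx2 scalar_mx2 oppmx2 oppr0.
by congr mx2; field; rewrite !gt_eqF.
Qed.

Lemma Pmat_offdiag_neq0 : 1 / (2 * w0) != 0.
Proof. by rewrite div1r invr_eq0 mulf_neq0 ?gt_eqF. Qed.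

Lemma lambda_min_Pmat :
  lambda_min P = sym2_min_eig (al / (4 * w0 ^+ 2) + 2 / al) (1 / (2 * w0)) (2 / al).
Proof. by rewrite lambda_min_sym2 ?Pmat_offdiag_neq0. Qed.

Lemma lambda_min_Pmat_gt0 : 0 < lambda_min P.
Proof.
rewrite lambda_min_Pmat; apply: sym2_min_eig_gt0.
  by rewrite addr_gt0 ?divr_gt0 ?mulr_gt0 ?exprn_gt0.
have -> : (al / (4 * w0 ^+ 2) + 2 / al) * (2 / al) - (1 / (2 * w0)) ^+ 2
          = 1 / (4 * w0 ^+ 2) + 4 / al ^+ 2 by field; rewrite !gt_eqF.
by rewrite addr_gt0 ?divr_gt0 ?mulr_gt0 ?exprn_gt0.
Qed.

Lemma qform_Pmat_ge z : lambda_min P * eucl_norm z ^+ 2 <= qform P z.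
Proof. by rewrite lambda_min_Pmat qform_sym2_ge ?Pmat_offdiag_neq0. Qed.

Lemma posdef_Pmat : posdef P.
Proof. exact: posdef_qform_ge trmx_Pmat lambda_min_Pmat_gt0 qform_Pmat_ge. Qed.

Lemma qform_cross_fz z d :
  (z^T *m P *m fz w0 al z d) 0 0 + ((fz w0 al z d)^T *m P *m z) 0 0
    = - eucl_norm z ^+ 2 + (expR d - 1) * qform (Gmat w0 al) z.
Proof.
have -> : fz w0 al z d = (A + (expR d - 1) *: Lam al) *m z.
  by rewrite /fz [RHS]mulmxDl scalemxAl.
rewrite qform_cross_mulmx lyapunov_mxD lyapunov_mxZ qformD qformZ.
by rewrite [lyapunov_mx _ _]Pmat_lyapunov -scaleN1r qformZ qform_scalar mul1r mulN1r.
Qed.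

End Oscillator.

Theorem mainTheorem4 (R : realType) (w0 al wd : R)
  (hw0 : 0 < w0) (hal : 0 < al) (hwd : 0 < wd) :
  (Pmat w0 al)^T = Pmat w0 al /\ posdef (Pmat w0 al) /\
  Pmat w0 al *m (J0 w0 + Lam al) + (J0 w0 + Lam al)^T *m Pmat w0 al = - 1%:M /\
  (forall (z : 'cV[R]_2) (d : R),
     derivable (Vline w0 al wd z d) 0 1 /\
     derive1 (Vline w0 al wd z d) 0 <=
       (- (1 / 2) * eucl_norm z ^+ 2 - bconst w0 al * (expR d - 1) ^+ 2)
       / (1 + qform (Pmat w0 al) z)).
Proof.
split; first exact: trmx_Pmat.
split; first exact: posdef_Pmat.
split; first exact: Pmat_lyapunov.
move=> z d.
have q_ge0 : 0 <= qform (Pmat w0 al) z.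
  apply: le_trans _ (qform_Pmat_ge hw0 z).
  by rewrite mulr_ge0 ?sqr_ge0 // ltW // lambda_min_Pmat_gt0.
have dV : is_derive (0 : R) 1 (Vline w0 al wd z d) _ :=
  is_derive_lyapunov_line _ _ _ (fz w0 al z d) (bconst w0 al / wd) d (fd wd d) q_ge0.
split; first exact: (@ex_derive _ _ _ _ _ _ _ dV).
rewrite derive1E (@derive_val _ _ _ _ _ _ _ dV) (qform_cross_fz hw0 hal).
have -> : bconst w0 al / wd * ((expR d - 1) * fd wd d) = - (bconst w0 al * (expR d - 1) ^+ 2).
  by rewrite /fd; field; rewrite gt_eqF.
apply: lyapunov_young.
- exact: sqr_ge0.
- exact: lambda_min_Pmat_gt0.
- exact: qform_Pmat_ge.
- exact: qform_le_spectral.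
Qed.
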